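(* Let $R$ be an $\mathbb{N}$-graded domain finitely generated over the field $R_0$, and let $M\neq0$ be a finitely generated $\mathbb{Z}$-graded $R$-module. Then not every element of $M$ is almost zero.
   Context: $R^{+\mathrm{GR}}$ is the maximal $\mathbb{Q}_{\ge0}$-graded subring of the absolute integral closure $R^+$ (integral closure of $R$ in an algebraic closure of its fraction field) extending the grading of $R$; $\nu(a)$ is the degree of the lowest nonzero homogeneous component of $a\in R^{+\mathrm{GR}}$. An element $m\in M$ is almost zero if for every $\varepsilon>0$ the element $m\otimes1\in M\otimes_R R^{+\mathrm{GR}}$ is annihilated by some nonzero $a\in R^{+\mathrm{GR}}$ with $\nu(a)<\varepsilon$. *)

From HB Require Import structures.
From mathcomp Require Import all_boot all_order all_algebra.
Set Implicit Arguments. Unset Strict Implicit. Unset Printing Implicit Defensive.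
Import Order.TTheory GRing.Theory Num.Theory.
Local Open Scope ring_scope.

Definition additive_sub (V : zmodType) (P : V -> Prop) : Prop :=
  P 0 /\ (forall x y, P x -> P y -> P (x - y)).

Definition graded_decomp (I : eqType) (V : zmodType)
    (T : V -> Prop) (C : I -> V -> Prop) (D : I -> Prop) : Prop :=
  (forall i, additive_sub (C i)) /\
  (forall i x, C i x -> T x) /\
  (forall x, T x -> exists (l : seq I) (f : I -> V),
      uniq l /\ (forall i, i \in l -> D i /\ C i (f i)) /\
      x = \sum_(i <- l) f i) /\
  (forall (l : seq I) (f : I -> V), uniq l ->
      (forall i, i \in l -> C i (f i)) -> \sum_(i <- l) f i = 0 ->
      forall i, i \in l -> f i = 0).

Definition Ngraded_ring (R : pzRingType) (Rn : nat -> R -> Prop) : Prop :=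
  graded_decomp (fun _ => True) Rn (fun _ => True) /\
  (forall i j x y, Rn i x -> Rn j y -> Rn (i + j)%N (x * y)).

Definition degree0_is_field (R : pzRingType) (Rn : nat -> R -> Prop) : Prop :=
  forall x, Rn 0%N x -> x != 0 -> exists y, Rn 0%N y /\ x * y = 1.

(* R is generated as a ring by R_0 together with finitely many elements *)
Definition fg_over_degree0 (R : pzRingType) (Rn : nat -> R -> Prop) : Prop :=
  exists gens : seq R, forall P : R -> Prop,
    (forall x, Rn 0%N x -> P x) -> (forall g, g \in gens -> P g) ->
    (forall x y, P x -> P y -> P (x + y)) ->
    (forall x y, P x -> P y -> P (x * y)) ->
    forall r, P r.

Definition Zgraded_module (R : pzRingType) (Rn : nat -> R -> Prop)
    (M : lmodType R) (Mz : int -> M -> Prop) : Prop :=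
  graded_decomp (fun _ => True) Mz (fun _ => True) /\
  (forall (n : nat) (z : int) r m, Rn n r -> Mz z m -> Mz (z + n%:Z) (r *: m)).

Definition fg_module (R : pzRingType) (M : lmodType R) : Prop :=
  exists gens : seq M, forall m : M, exists cs : seq R,
    m = \sum_(i < size gens) cs`_i *: gens`_i.

Section Closure.
Variables (R : comPzRingType) (K : fieldType) (iota : {rmorphism R -> K}).

Definition coefs_in_R (p : {poly K}) : Prop :=
  forall i, exists r : R, p`_i = iota r.

(* K is algebraic over (the fraction field of) iota(R) *)
Definition algebraic_over : Prop :=
  forall k : K, exists p : {poly K}, p != 0 /\ coefs_in_R p /\ root p k.

(* k lies in R^+, the integral closure of iota(R) in K *)
Definition integral_over_R (k : K) : Prop :=
  exists p : {poly K}, p \is monic /\ coefs_in_R p /\ root p k.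

(* (S, (S_q)_q) is a Q_{>=0}-graded subring of R^+ extending the grading Rn *)
Definition Qgraded_ext (Rn : nat -> R -> Prop)
    (S : K -> Prop) (Sq : rat -> K -> Prop) : Prop :=
  (forall k, S k -> integral_over_R k) /\
  S 1 /\ (forall x y, S x -> S y -> S (x - y)) /\
  (forall x y, S x -> S y -> S (x * y)) /\
  (forall q, q < 0 -> forall x, Sq q x -> x = 0) /\
  graded_decomp S Sq (fun q => 0 <= q) /\
  (forall q r x y, Sq q x -> Sq r y -> Sq (q + r) (x * y)) /\
  (forall (n : nat) r, Rn n r -> Sq n%:R (iota r)).

Definition max_Qgraded_ext (Rn : nat -> R -> Prop)
    (S : K -> Prop) (Sq : rat -> K -> Prop) : Prop :=
  Qgraded_ext Rn S Sq /\
  forall (S' : K -> Prop) (Sq' : rat -> K -> Prop),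
    Qgraded_ext Rn S' Sq' ->
    (forall k, S k -> S' k) -> (forall q k, Sq q k -> Sq' q k) ->
    forall k, S' k -> S k.

(* nu a = q : q is the degree of the lowest nonzero homogeneous component *)
Definition nu_is (Sq : rat -> K -> Prop) (a : K) (q : rat) : Prop :=
  exists (l : seq rat) (f : rat -> K),
    uniq l /\ (forall i, i \in l -> Sq i (f i)) /\ a = \sum_(i <- l) f i /\
    q \in l /\ f q != 0 /\ (forall i, i \in l -> f i != 0 -> q <= i).

End Closure.

(* ---------- the tensor product M (x)_R S, as a quotient of the free
   R-module on M x S by the bilinearity relations ---------- *)

Inductive trel (R M K : Type) :=
| TAddL of M & M & K
| TAddR of M & K & K
| TScalL of R & M & K
| TScalR of R & M & K.

Section Tensor.
Variables (R : comPzRingType) (M : lmodType R) (K : fieldType)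
  (iota : {rmorphism R -> K}).

(* basis element [m (x) a] of the free module, as a function M -> K -> R *)
Definition tdelta (m : M) (a : K) : M -> K -> R :=
  fun x y => ((x == m) && (y == a))%:R.

Definition trel_eval (t : trel R M K) : M -> K -> R :=
  match t with
  | TAddL x1 x2 y => fun x' y' =>
      tdelta (x1 + x2) y x' y' - tdelta x1 y x' y' - tdelta x2 y x' y'
  | TAddR x y1 y2 => fun x' y' =>
      tdelta x (y1 + y2) x' y' - tdelta x y1 x' y' - tdelta x y2 x' y'
  | TScalL r x y => fun x' y' => tdelta (r *: x) y x' y' - r * tdelta x y x' y'
  | TScalR r x y => fun x' y' => tdelta x (iota r * y) x' y' - r * tdelta x y x' y'
  end.

Definition trel_in (S : K -> Prop) (t : trel R M K) : Prop :=
  match t with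
  | TAddL _ _ y => S y
  | TAddR _ y1 y2 => S y1 /\ S y2
  | TScalL _ _ y => S y
  | TScalR _ _ y => S y
  end.

(* m (x) a = 0 in M (x)_R S  (for a in S) *)
Definition tensor_zero (S : K -> Prop) (m : M) (a : K) : Prop :=
  exists s : seq (R * trel R M K),
    foldr (fun p P => trel_in S p.2 /\ P) True s /\
    forall x y, tdelta m a x y = \sum_(p <- s) p.1 * trel_eval p.2 x y.

(* m is almost zero: for every eps > 0, m (x) 1 is killed by some nonzero
   a in S with nu(a) < eps; note a . (m (x) 1) = m (x) a. *)
Definition almost_zero (S : K -> Prop) (Sq : rat -> K -> Prop) (m : M) : Prop :=
  forall eps : rat, 0 < eps ->
    exists a : K, S a /\ a != 0 /\ (exists q, nu_is Sq a q /\ q < eps) /\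
      tensor_zero S m a.

End Tensor.

From HB Require Import structures.
From mathcomp Require Import all_boot all_order all_algebra.
From mathcomp Require Import zify lra.
From Stdlib Require Import ClassicalEpsilon.
Set Implicit Arguments. Unset Strict Implicit. Unset Printing Implicit Defensive.
Import Order.TTheory GRing.Theory Num.Theory.
Local Open Scope ring_scope.

(* Since M is finitely generated and graded, it has a lowest degree
   d in which it is nonzero; pick 0 <> m in M_d.  If m were almost zero, then
   m (x) a = 0 in M (x)_R S for some nonzero a in S with nu(a) = q < 1, so the
   degree-q component a_q of a is nonzero.  The vanishing of m (x) a is an
   identity in the free R-module on M x S involving finitely many points; we
   build an additive map Phi from that free module to K, sending x (x) y to
   iota(psi(x_d)) * y_q, where psi is an R_0-linear form (R_0 is a field) on the
   finite R_0-span of the x_d with psi(m) <> 0.  Phi kills every bilinearity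
   relation because (r x)_d = r_0 x_d (d is the lowest degree) and
   (iota(r) y)_q = iota(r_0) y_q (q < 1 and S lives in degrees >= 0), whereas
   Phi(m (x) a) = iota(psi m) a_q <> 0: a contradiction. *)

Lemma sum_single_term (I : eqType) (V : zmodType) (l : seq I) (F : I -> V) i0 :
  uniq l -> (forall i, i \in l -> i != i0 -> F i = 0) -> (i0 \notin l -> F i0 = 0) ->
  \sum_(i <- l) F i = F i0.
Proof.
move=> ul Fi F0; case: (boolP (i0 \in l)) => il.
  by rewrite (bigD1_seq i0) //= big1_seq ?addr0 // => i /andP [ne /Fi]; apply.
rewrite F0 // big1_seq // => i /andP [_ li]; apply: Fi => //.
by apply: contraNneq il => <-.
Qed.

Lemma sum_superset (I : eqType) (V : zmodType) (l L : seq I) (F : I -> V) :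
  uniq l -> uniq L -> {subset l <= L} -> (forall i, i \notin l -> F i = 0) ->
  \sum_(i <- L) F i = \sum_(i <- l) F i.
Proof.
move=> ul uL sub F0.
rewrite (bigID (mem l)) /= [X in _ + X]big1_seq ?addr0; last by move=> i /andP [/F0].
rewrite -big_filter; apply/perm_big/uniq_perm; rewrite ?filter_uniq // => i.
by rewrite mem_filter; case: (boolP (i \in l)) => // /sub ->.
Qed.

Section GradedComponents.
Variables (I : eqType) (V : zmodType) (T : V -> Prop) (C : I -> V -> Prop) (D : I -> Prop).
Hypothesis gd : graded_decomp T C D.

Definition is_decomposition (x : V) (lf : seq I * (I -> V)) : Prop :=
  uniq lf.1 /\ (forall i, i \in lf.1 -> C i (lf.2 i)) /\ x = \sum_(i <- lf.1) lf.2 i.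

Definition restrict (l : seq I) (f : I -> V) (i : I) : V := if i \in l then f i else 0.

Definition gcomp (i : I) (x : V) : V :=
  let lf := epsilon (inhabits ([::], fun _ => 0)) (is_decomposition x) in
  restrict lf.1 lf.2 i.

Lemma homog0 i : C i 0.
Proof. by case: gd => H _; case: (H i). Qed.

Lemma homogB i x y : C i x -> C i y -> C i (x - y).
Proof. by case: gd => H _; case: (H i) => _; apply. Qed.

Lemma homogD i x y : C i x -> C i y -> C i (x + y).
Proof. by move=> Cx Cy; have := homogB Cx (homogB (homog0 i) Cy); rewrite sub0r opprK. Qed.

Lemma restrict_out l f i : i \notin l -> restrict l f i = 0.
Proof. by rewrite /restrict => /negbTE ->. Qed.

Lemma restrict_sum l f : \sum_(i <- l) restrict l f i = \sum_(i <- l) f i.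
Proof. by rewrite !big_seq; apply: eq_bigr => i il; rewrite /restrict il. Qed.

Lemma restrict_homog l f : (forall i, i \in l -> C i (f i)) -> forall i, C i (restrict l f i).
Proof. by move=> Cf i; rewrite /restrict; case: ifP => [/Cf|_] //; apply: homog0. Qed.

Lemma decomposition_unique (l1 l2 : seq I) f1 f2 : uniq l1 -> uniq l2 ->
  (forall i, i \in l1 -> C i (f1 i)) -> (forall i, i \in l2 -> C i (f2 i)) ->
  \sum_(i <- l1) f1 i = \sum_(i <- l2) f2 i -> forall i, restrict l1 f1 i = restrict l2 f2 i.
Proof.
move=> u1 u2 C1 C2 E i; pose L := undup (l1 ++ l2).
have uL : uniq L by apply: undup_uniq.
have s1 : {subset l1 <= L} by move=> j jl; rewrite mem_undup mem_cat jl.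
have s2 : {subset l2 <= L} by move=> j jl; rewrite mem_undup mem_cat jl orbT.
have diff0 : \sum_(j <- L) (restrict l1 f1 j - restrict l2 f2 j) = 0.
  rewrite sumrB (sum_superset u1 uL s1 (@restrict_out l1 f1)).
  by rewrite (sum_superset u2 uL s2 (@restrict_out l2 f2)) !restrict_sum E subrr.
case: (boolP (i \in L)) => iL.
  apply/eqP; rewrite -subr_eq0; apply/eqP; case: gd => _ [_ [_ indep]].
  apply: (indep L _ uL _ diff0 i iL) => j _.
  by apply: homogB; apply: restrict_homog.
by rewrite !restrict_out //; apply: contra iL; [apply: s2 | apply: s1].
Qed.

Lemma gcompE x l f : T x -> uniq l -> (forall i, i \in l -> C i (f i)) ->
  x = \sum_(i <- l) f i -> forall i, gcomp i x = restrict l f i.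
Proof.
move=> Tx ul Cf E i; rewrite /gcomp; set lf := epsilon _ _.
have [u' [C' E']] : is_decomposition x lf.
  apply: epsilon_spec; case: gd => _ [_ [dec _]].
  have [l' [f' [u' [H' E']]]] := dec x Tx.
  by exists (l', f'); split => //; split => // j /H' [].
by apply: decomposition_unique => //; rewrite -E'.
Qed.

Lemma gcomp_homog j x i : C j x -> gcomp i x = if i == j then x else 0.
Proof.
move=> Cx; have Tx : T x by case: gd => _ [inT _]; apply: inT Cx.
rewrite (@gcompE x [:: j] (fun _ => x)) ?big_seq1 //; first by rewrite /restrict inE.
by move=> k; rewrite inE => /eqP ->.
Qed.

Lemma gcomp0 i : gcomp i 0 = 0.
Proof. by rewrite (gcomp_homog i (homog0 i)); case: eqP. Qed.

Lemma gcomp_in x i : T x -> C i (gcomp i x).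
Proof.
move=> Tx; case: gd => _ [_ [dec _]]; have [l [f [u [H E]]]] := dec x Tx.
by rewrite (gcompE Tx u _ E) => [|j /H []//]; apply: restrict_homog => j /H [].
Qed.

Lemma gcomp_support x : T x -> exists l, uniq l /\ x = \sum_(i <- l) gcomp i x /\
  forall i, i \notin l -> gcomp i x = 0.
Proof.
move=> Tx; case: gd => _ [_ [dec _]]; have [l [f [u [H E]]]] := dec x Tx.
have Cf : forall i, i \in l -> C i (f i) by move=> j /H [].
exists l; split => //; split => [|i il]; last by rewrite (gcompE Tx u Cf E) restrict_out.
by rewrite {1}E -restrict_sum; apply: eq_bigr => i _; rewrite (gcompE Tx u Cf E).
Qed.

Lemma gcompD x y i : T x -> T y -> T (x + y) -> gcomp i (x + y) = gcomp i x + gcomp i y.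
Proof.
move=> Tx Ty Txy.
have [l1 [u1 [E1 Z1]]] := gcomp_support Tx; have [l2 [u2 [E2 Z2]]] := gcomp_support Ty.
pose L := undup (l1 ++ l2).
have uL : uniq L by apply: undup_uniq.
have s1 : {subset l1 <= L} by move=> j jl; rewrite mem_undup mem_cat jl.
have s2 : {subset l2 <= L} by move=> j jl; rewrite mem_undup mem_cat jl orbT.
have E : x + y = \sum_(j <- L) (gcomp j x + gcomp j y).
  by rewrite big_split /= (sum_superset u1 uL s1 Z1) (sum_superset u2 uL s2 Z2) -E1 -E2.
rewrite (gcompE Txy uL _ E) => [|j _]; last by apply: homogD; apply: gcomp_in.
rewrite /restrict; case: ifP => // /negbT iL.
by rewrite Z1 ?Z2 ?addr0 //; apply: contra iL; [apply: s2 | apply: s1].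
Qed.

Lemma gcomp_sum (J : Type) (s : seq J) (F : J -> V) i :
  T 0 -> (forall x y, T x -> T y -> T (x + y)) -> (forall k, T (F k)) ->
  gcomp i (\sum_(k <- s) F k) = \sum_(k <- s) gcomp i (F k).
Proof.
move=> T0 TD TF; have Tsum : forall s, T (\sum_(k <- s) F k).
  by elim=> [|k s' IH]; rewrite ?big_nil ?big_cons //; apply: TD.
elim: s => [|k s IH]; first by rewrite !big_nil gcomp0.
by rewrite !big_cons gcompD ?IH //; apply: TD.
Qed.

End GradedComponents.

Lemma gcomp_shift (I V : zmodType) (T : V -> Prop) (C : I -> V -> Prop) (D : I -> Prop)
    (phi : V -> V) (e : I) z j :
  graded_decomp T C D -> T 0 -> (forall x y, T x -> T y -> T (x + y)) ->
  {morph phi : x y / x + y} -> (forall k x, C k x -> C (k + e) (phi x)) -> T z ->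
  gcomp C j (phi z) = phi (gcomp C (j - e) z).
Proof.
move=> gd T0 TD phiD phiC Tz.
have phi0 : phi 0 = 0 by apply: (addrI (phi 0)); rewrite -phiD !addr0.
have [l [ul [E Z]]] := gcomp_support gd Tz.
have TC : forall k x, C k x -> T x by case: gd => _ [inT _].
have Cphi k : C (k + e) (phi (gcomp C k z)) by apply/phiC/(gcomp_in gd).
rewrite {1}E (big_morph phi phiD phi0) (gcomp_sum gd) // => [|k]; last exact: TC (Cphi k).
rewrite (@sum_single_term _ _ _ _ (j - e)) // => [|k _ ne|/Z ->].
- by rewrite (gcomp_homog gd j (Cphi _)) subrK eqxx.
- rewrite (gcomp_homog gd j (Cphi _)); case: eqP => // jk.
  by move: ne; rewrite jk addrK eqxx.
by rewrite phi0 (gcomp0 gd).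
Qed.

Section SpanOverSubfield.
Variables (R : comPzRingType) (M : lmodType R) (P : R -> Prop).
Hypothesis P0 : P 0.
Hypothesis PB : forall x y, P x -> P y -> P (x - y).
Hypothesis PM : forall x y, P x -> P y -> P (x * y).
Hypothesis Pinv : forall x, P x -> x != 0 -> exists y, P y /\ x * y = 1.

Fixpoint inspan (g : seq M) (v : M) : Prop :=
  match g with
  | [::] => v = 0
  | w :: g' => exists c u, P c /\ inspan g' u /\ v = c *: w + u
  end.

Definition span_form (g : seq M) (psi : M -> R) : Prop :=
  (forall u v, inspan g u -> inspan g v -> psi (u + v) = psi u + psi v) /\
  (forall c u, P c -> inspan g u -> psi (c *: u) = c * psi u).

Lemma P_add x y : P x -> P y -> P (x + y).
Proof. by move=> Px Py; have := PB Px (PB P0 Py); rewrite sub0r opprK. Qed.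

Lemma span0 g : inspan g 0.
Proof. by elim: g => [|w g IH] //=; exists 0, 0; rewrite scale0r addr0. Qed.

Lemma spanD g u v : inspan g u -> inspan g v -> inspan g (u + v).
Proof.
elim: g u v => [|w g IH] u v /=; first by move=> -> ->; rewrite addr0.
move=> [c [u' [Pc [Hu ->]]]] [c' [v' [Pc' [Hv ->]]]].
exists (c + c'), (u' + v'); do !split; [exact: P_add | exact: IH |].
by rewrite scalerDl addrACA.
Qed.

Lemma spanZ g c u : P c -> inspan g u -> inspan g (c *: u).
Proof.
elim: g u => [|w g IH] u Pc /=; first by move=> ->; rewrite scaler0.
move=> [c' [u' [Pc' [Hu ->]]]].
exists (c * c'), (c *: u'); do !split; [exact: PM | exact: IH |].
by rewrite scalerDr scalerA.
Qed.

Lemma spanN g u : inspan g u -> inspan g (- u).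
Proof.
elim: g u => [|w g IH] u /=; first by move=> ->; rewrite oppr0.
move=> [c [u' [Pc [Hu ->]]]].
exists (0 - c), (- u'); do !split; [exact: PB | exact: IH |].
by rewrite sub0r scaleNr opprD.
Qed.

Lemma spanB g u v : inspan g u -> inspan g v -> inspan g (u - v).
Proof. by move=> Hu Hv; apply/spanD/spanN. Qed.

Lemma spanG g w c : w \in g -> P c -> inspan g (c *: w).
Proof.
elim: g => [|w' g IH] //=; rewrite inE => /orP [/eqP ->|wg] Pc.
  by exists c, 0; rewrite addr0; do !split => //; apply: span0.
by exists 0, (c *: w); rewrite scale0r add0r; do !split => //; apply: IH.
Qed.

Lemma span_cons_redundant g w v : inspan g w -> inspan (w :: g) v -> inspan g v.
Proof. by move=> gw [c [u [Pc [gu ->]]]]; apply/spanD/gu/spanZ. Qed.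

Lemma span_coef_unique g w c1 c2 u1 u2 : ~ inspan g w -> P c1 -> P c2 ->
  inspan g u1 -> inspan g u2 -> c1 *: w + u1 = c2 *: w + u2 -> c1 = c2.
Proof.
move=> gw P1 P2 H1 H2 E; apply/eqP; rewrite -subr_eq0; apply/negPn/negP => ne.
have [y [Py yK]] := Pinv (PB P1 P2) ne; apply: gw.
have -> : w = y *: (u2 - u1).
  have <- : (c1 - c2) *: w = u2 - u1.
    by rewrite scalerBl -[c1 *: w](addrK u1) E addrAC [c2 *: w + u2]addrC addrK.
  by rewrite scalerA mulrC yK scale1r.
exact/spanZ/spanB.
Qed.

Section Coefficient.
Variables (g : seq M) (w : M).
Hypothesis gw : ~ inspan g w.

Definition span_coef (v : M) : R :=
  epsilon (inhabits 0) (fun c => P c /\ exists u, inspan g u /\ v = c *: w + u).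

Lemma span_coefE c u : P c -> inspan g u -> span_coef (c *: w + u) = c.
Proof.
move=> Pc gu; have [Pc' [u' [gu' E]]] := epsilon_spec (inhabits 0)
  (fun c' => P c' /\ exists u', inspan g u' /\ c *: w + u = c' *: w + u')
  (ex_intro _ c (conj Pc (ex_intro _ u (conj gu erefl)))).
by rewrite /span_coef; symmetry; apply: (span_coef_unique gw Pc Pc' gu gu' E).
Qed.

Lemma span_coef_form : span_form (w :: g) span_coef.
Proof.
split=> [v1 v2 [c1 [u1 [P1 [H1 ->]]]] [c2 [u2 [P2 [H2 ->]]]]|c v Pc [c' [u [P' [H ->]]]]].
  by rewrite addrACA -scalerDl !span_coefE //; [apply: P_add | apply: spanD].
by rewrite scalerDr scalerA !span_coefE //; [apply: PM | apply: spanZ].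
Qed.

Lemma span_form_extend psi : span_form g psi ->
  span_form (w :: g) (fun v => psi (v - span_coef v *: w)).
Proof.
have dropw c u : P c -> inspan g u -> c *: w + u - span_coef (c *: w + u) *: w = u.
  by move=> Pc gu; rewrite span_coefE // addrC addKr.
move=> [psiD psiZ]; split.
  move=> v1 v2 [c1 [u1 [P1 [H1 ->]]]] [c2 [u2 [P2 [H2 ->]]]].
  by rewrite addrACA -scalerDl !dropw ?psiD //; [apply: P_add | apply: spanD].
move=> c v Pc [c' [u [P' [H ->]]]].
by rewrite scalerDr scalerA !dropw ?psiZ //; [apply: PM | apply: spanZ].
Qed.

End Coefficient.

Lemma span_form_nonvanishing g m : inspan g m -> m != 0 ->
  exists psi : M -> R, span_form g psi /\ psi m != 0.
Proof.
elim: g m => [|w g IH] m /=; first by move=> -> /eqP.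
move=> [c [u [Pc [gu Em]]]] m0.
case: (classic (inspan g w)) => [gw|ngw].
  have gm : inspan g m by apply: (span_cons_redundant gw); exists c, u.
  have [psi [[psiD psiZ] psim]] := IH m gm m0.
  exists psi; do !split=> //.
    by move=> ? ? /(span_cons_redundant gw) ? /(span_cons_redundant gw); apply: psiD.
  by move=> ? ? ? /(span_cons_redundant gw); apply: psiZ.
case: (eqVneq u 0) => [u0|un0].
  exists (span_coef g w); split; first exact: span_coef_form.
  have := span_coefE ngw Pc (span0 g); rewrite Em u0 addr0 => ->.
  by apply: contra_neq m0 => c0; rewrite Em u0 c0 scale0r addr0.
have [psi [psiF psiu]] := IH u gu un0.
exists (fun v => psi (v - span_coef g w v *: w)); split; first exact: span_form_extend.
by rewrite Em span_coefE // addrC addKr.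
Qed.

End SpanOverSubfield.

Lemma least_nat (Pn : nat -> Prop) n :
  Pn n -> exists k, Pn k /\ forall k', (k' < k)%N -> ~ Pn k'.
Proof.
elim/ltn_ind: n => n IH Pn_n.
case: (classic (exists2 k, (k < n)%N & Pn k)) => [[k kn Pk]|none]; first exact: IH kn Pk.
by exists n; split => // k kn Pk; apply: none; exists k.
Qed.

Lemma int_lower_bound (s : seq int) : exists b : int, forall k, k \in s -> b <= k.
Proof.
elim: s => [|x s [b Hb]]; first by exists 0.
by exists (Num.min x b) => k; rewrite inE ge_min => /orP [/eqP ->|/Hb ->]; rewrite ?lexx ?orbT.
Qed.

Section GradedModule.
Variables (R : comPzRingType) (Rn : nat -> R -> Prop) (M : lmodType R) (Mz : int -> M -> Prop).
Hypothesis gdR : graded_decomp (fun _ => True) Rn (fun _ => True).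
Hypothesis gdM : graded_decomp (fun _ => True) Mz (fun _ => True).
Hypothesis actM : forall (n : nat) (z : int) r m, Rn n r -> Mz z m -> Mz (z + n%:Z) (r *: m).

Local Notation cR := (gcomp Rn).
Local Notation cM := (gcomp Mz).

Lemma cM_scale r z j : exists lr : seq nat, uniq lr /\
  cM j (r *: z) = \sum_(n <- lr) cR n r *: cM (j - n%:Z) z /\
  (forall n, n \notin lr -> cR n r = 0).
Proof.
have [lr [u [E Z]]] := gcomp_support gdR (x:=r) I.
exists lr; do !split => //.
rewrite {1}E scaler_suml (gcomp_sum gdM) //; apply: eq_bigr => n _.
apply: (@gcomp_shift _ _ _ _ _ ( *:%R (cR n r)) n%:Z z j gdM) => // [x y|k x].
  exact: scalerDr.
by apply: actM; apply: (gcomp_in gdR).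
Qed.

Lemma cM_lowest d r z : (forall z j, j < d -> cM j z = 0) ->
  cM d (r *: z) = cR 0 r *: cM d z.
Proof.
move=> low; have [lr [u [-> Z]]] := cM_scale r z d.
rewrite (@sum_single_term _ _ _ _ 0%N) // => [|n _ n0|/Z ->]; rewrite ?subr0 ?scale0r //.
by rewrite low ?scaler0 //; move: n0; rewrite -lt0n; lia.
Qed.

Lemma support_lower_bound (L : seq M) :
  exists b : int, forall g k, g \in L -> cM k g != 0 -> b <= k.
Proof.
elim: L => [|g L [b Hb]]; first by exists 0.
have [l [_ [_ Z]]] := gcomp_support gdM (x:=g) I.
have [b' Hb'] := int_lower_bound l.
exists (Num.min b' b) => g' k; rewrite inE ge_min => /orP [/eqP ->|g'L] nz.
  by rewrite Hb' //; apply: contraNT nz => /Z ->.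
by rewrite (Hb g' k g'L nz) orbT.
Qed.

Lemma degrees_bounded_below : fg_module M ->
  exists b : int, forall z j, j < b -> cM j z = 0.
Proof.
move=> [gens gensP]; have [b Hb] := support_lower_bound gens.
exists b => z j jb; have [cs ->] := gensP z.
rewrite (gcomp_sum gdM) // big1 // => i _.
have [lr [_ [-> _]]] := cM_scale cs`_i gens`_i j.
rewrite big1 // => n _; suff -> : cM (j - n%:Z) gens`_i = 0 by rewrite scaler0.
apply: NNPP => /eqP /(Hb _ _ (mem_nth 0 (ltn_ord i))); lia.
Qed.

Lemma lowest_degree : fg_module M -> (exists m : M, m != 0) ->
  exists d : int, (forall z j, j < d -> cM j z = 0) /\ exists m, Mz d m /\ m != 0.
Proof.
move=> fg [m0 m0nz]; have [b Hb] := degrees_bounded_below fg.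
have [j0 j0nz] : exists j0, cM j0 m0 != 0.
  apply: NNPP => none; apply/negP: m0nz; apply/negPn/eqP.
  have [l [_ [E _]]] := gcomp_support gdM (x:=m0) I.
  by rewrite E big1 // => k _; apply: NNPP => nz; apply: none; exists k; apply/eqP.
have bj0 : b <= j0 by rewrite leNgt; apply: contra j0nz => /(Hb m0) ->.
pose nonzero_at k := exists z, cM (b + k%:Z) z != 0.
have [k [[z zk] below]] : exists k, nonzero_at k /\ forall k', (k' < k)%N -> ~ nonzero_at k'.
  by apply: (@least_nat _ `|j0 - b|%N); exists m0; have -> : b + `|j0 - b|%:Z = j0 by lia.
exists (b + k%:Z); split; last by exists (cM (b + k%:Z) z); split => //; apply: (gcomp_in gdM).
move=> z' j jk; case: (ltP j b) => [/Hb //|bj]; apply: NNPP => /eqP nz.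
by apply: (below `|j - b|%N); [lia | exists z'; have -> : b + `|j - b|%:Z = j by lia].
Qed.

End GradedModule.

Section GradedExtension.
Variables (R : comPzRingType) (Rn : nat -> R -> Prop) (K : fieldType)
  (iota : {rmorphism R -> K}) (S : K -> Prop) (Sq : rat -> K -> Prop).
Hypothesis gdR : graded_decomp (fun _ => True) Rn (fun _ => True).
Hypothesis S1 : S 1.
Hypothesis SB : forall x y, S x -> S y -> S (x - y).
Hypothesis SM : forall x y, S x -> S y -> S (x * y).
Hypothesis Sneg : forall q, q < 0 -> forall x, Sq q x -> x = 0.
Hypothesis gdS : graded_decomp S Sq (fun q => 0 <= q).
Hypothesis SqM : forall q r x y, Sq q x -> Sq r y -> Sq (q + r) (x * y).
Hypothesis Siota : forall (n : nat) r, Rn n r -> Sq n%:R (iota r).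

Local Notation cR := (gcomp Rn).
Local Notation cS := (gcomp Sq).

Lemma S0 : S 0.
Proof. by have := SB S1 S1; rewrite subrr. Qed.

Lemma SD x y : S x -> S y -> S (x + y).
Proof. by move=> Sx Sy; have := SB Sx (SB S0 Sy); rewrite sub0r opprK. Qed.

Lemma Siota_comp n r : Sq n%:R (iota (cR n r)).
Proof. by apply: Siota; apply: (gcomp_in gdR). Qed.

Lemma cS_iota r y q : q < 1 -> S y -> cS q (iota r * y) = iota (cR 0 r) * cS q y.
Proof.
move=> q1 Sy; have SqS p x : Sq p x -> S x by case: gdS => _ [inS _]; apply: inS.
have shift n : cS q (iota (cR n r) * y) = iota (cR n r) * cS (q - n%:R) y.
  apply: (@gcomp_shift _ _ _ _ _ ( *%R (iota (cR n r))) n%:R y q gdS) => //.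
  - exact: S0.
  - exact: SD.
  - exact: mulrDr.
  by move=> k x /(SqM (Siota_comp n r)); rewrite addrC.
have [lr [u [E Z]]] := gcomp_support gdR (x:=r) I.
rewrite {1}E rmorph_sum mulr_suml (gcomp_sum gdS); last 3 first.
- exact: S0.
- exact: SD.
- by move=> n; apply: SM => //; apply: SqS (Siota_comp n r).
rewrite (@sum_single_term _ _ _ _ 0%N) // => [|n _ n0|/Z ->]; last first.
- by rewrite rmorph0 mul0r (gcomp0 gdS).
- rewrite shift (Sneg _ (gcomp_in gdS _ Sy)) ?mulr0 //.
  have n1 : (1 <= n%:R :> rat) by rewrite ler1n lt0n.
  lra.
by rewrite shift subr0.
Qed.

End GradedExtension.

Definition relation_points (R : comPzRingType) (M : lmodType R) (K : fieldType)
    (iota : {rmorphism R -> K}) (t : trel R M K) : seq (M * K) :=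
  match t with
  | TAddL x1 x2 y => [:: (x1 + x2, y); (x1, y); (x2, y)]
  | TAddR x y1 y2 => [:: (x, y1 + y2); (x, y1); (x, y2)]
  | TScalL r x y => [:: (r *: x, y); (x, y)]
  | TScalR r x y => [:: (x, iota r * y); (x, y)]
  end.

Section Obstruction.
Variables (R : comPzRingType) (Rn : nat -> R -> Prop) (M : lmodType R) (Mz : int -> M -> Prop)
  (K : fieldType) (iota : {rmorphism R -> K}) (S : K -> Prop) (Sq : rat -> K -> Prop).
Hypothesis gdR : graded_decomp (fun _ => True) Rn (fun _ => True).
Hypothesis mulR : forall i j x y, Rn i x -> Rn j y -> Rn (i + j)%N (x * y).
Hypothesis fieldR : degree0_is_field Rn.
Hypothesis gdM : graded_decomp (fun _ => True) Mz (fun _ => True).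
Hypothesis actM : forall (n : nat) (z : int) r m, Rn n r -> Mz z m -> Mz (z + n%:Z) (r *: m).
Hypothesis S1 : S 1.
Hypothesis SB : forall x y, S x -> S y -> S (x - y).
Hypothesis SM : forall x y, S x -> S y -> S (x * y).
Hypothesis Sneg : forall q, q < 0 -> forall x, Sq q x -> x = 0.
Hypothesis gdS : graded_decomp S Sq (fun q => 0 <= q).
Hypothesis SqM : forall q r x y, Sq q x -> Sq r y -> Sq (q + r) (x * y).
Hypothesis Siota : forall (n : nat) r, Rn n r -> Sq n%:R (iota r).

Local Notation cR := (gcomp Rn).
Local Notation cM := (gcomp Mz).
Local Notation cS := (gcomp Sq).
Local Notation R0 := (Rn 0).

Let R0_0 : R0 0 := homog0 gdR 0.
Let R0_B : forall x y, R0 x -> R0 y -> R0 (x - y) := @homogB _ _ _ _ _ gdR 0.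
Let R0_M : forall x y, R0 x -> R0 y -> R0 (x * y) := @mulR 0 0.

Section Functional.
Variables (d : int) (q : rat) (pts : seq (M * K)) (psi : M -> R).
Hypothesis d_lowest : forall z j, j < d -> cM j z = 0.
Hypothesis q_lt1 : q < 1.
Hypothesis pts_uniq : uniq pts.
Hypothesis psi_form : span_form R0 [seq cM d t.1 | t <- pts] psi.

Definition pairing (c : R) (t : M * K) : K := iota (psi (cM d (c *: t.1))) * cS q t.2.

Definition Phi (F : M -> K -> R) : K := \sum_(t <- pts) pairing (F t.1 t.2) t.

(* By [cM_lowest], the degree-[d] parts of multiples of the points lie in the
   [R0]-span of the degree-[d] parts of the points. *)
Lemma span_pts c t : t \in pts -> inspan R0 [seq cM d t.1 | t <- pts] (cM d (c *: t.1)).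
Proof.
move=> tpts; rewrite (cM_lowest gdR gdM actM) //.
by apply: (spanG R0_0); [apply/mapP; exists t | apply: (gcomp_in gdR)].
Qed.

Lemma span_pts1 x y : (x, y) \in pts -> inspan R0 [seq cM d t.1 | t <- pts] (cM d x).
Proof. by rewrite -{2}[x]scale1r; apply: (span_pts 1). Qed.

Lemma psi0 : psi 0 = 0.
Proof.
case: psi_form => _ psiZ.
by have := psiZ 0 0 R0_0 (span0 R0_0 _); rewrite scale0r mul0r.
Qed.

Lemma pairing0 t : pairing 0 t = 0.
Proof. by rewrite /pairing scale0r (gcomp0 gdM) psi0 rmorph0 mul0r. Qed.

Lemma pairingD c1 c2 t : t \in pts -> pairing (c1 + c2) t = pairing c1 t + pairing c2 t.
Proof.
case: psi_form => psiD _ tpts.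
by rewrite /pairing scalerDl (gcompD gdM) // psiD ?rmorphD ?mulrDl //; apply: span_pts.
Qed.

Lemma pairingN c t : t \in pts -> pairing (- c) t = - pairing c t.
Proof. by move=> tpts; apply/eqP; rewrite -addr_eq0 -pairingD // addNr pairing0. Qed.

Lemma pairingM c1 c2 t : t \in pts -> pairing (c1 * c2) t = iota (cR 0 c1) * pairing c2 t.
Proof.
case: psi_form => _ psiZ tpts.
rewrite /pairing -scalerA (cM_lowest gdR gdM actM) // psiZ ?rmorphM ?mulrA //.
  exact: (gcomp_in gdR).
exact: span_pts.
Qed.

Lemma Phi_ext F1 F2 : (forall x y, F1 x y = F2 x y) -> Phi F1 = Phi F2.
Proof. by move=> E; apply: eq_bigr => t _; rewrite E. Qed.

Lemma PhiB F1 F2 : Phi (fun x y => F1 x y - F2 x y) = Phi F1 - Phi F2.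
Proof.
rewrite /Phi -sumrB !big_seq; apply: eq_bigr => t tpts.
by rewrite pairingD ?pairingN.
Qed.

Lemma PhiM c F : Phi (fun x y => c * F x y) = iota (cR 0 c) * Phi F.
Proof. by rewrite /Phi mulr_sumr !big_seq; apply: eq_bigr => t tpts; rewrite pairingM. Qed.

Lemma Phi_sum (J : Type) (s : seq J) (F : J -> M -> K -> R) :
  Phi (fun x y => \sum_(j <- s) F j x y) = \sum_(j <- s) Phi (F j).
Proof.
rewrite /Phi exchange_big /= !big_seq; apply: eq_bigr => t tpts.
by apply: (big_morph (pairing^~ t)) => [c1 c2|]; [apply: pairingD | apply: pairing0].
Qed.

Lemma Phi_delta x y : (x, y) \in pts -> Phi (tdelta x y) = iota (psi (cM d x)) * cS q y.
Proof.
move=> xy; rewrite /Phi (@sum_single_term _ _ _ _ (x, y)) // => [|[x' y'] _ ne|]; last first.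
- by rewrite xy.
- by rewrite /tdelta /=; move: ne; rewrite -xpair_eqE => /negbTE ->; apply: pairing0.
by rewrite /pairing /tdelta /= !eqxx scale1r.
Qed.

Lemma Phi_relation t : trel_in S t -> {subset relation_points iota t <= pts} ->
  Phi (trel_eval iota t) = 0.
Proof.
case: psi_form => psiD psiZ; case: t => [x1 x2 y|x y1 y2|r x y|r x y] /= Sin.
- move/allP; rewrite /= andbT => /and3P [p12 p1 p2].
  rewrite !PhiB !Phi_delta // (gcompD gdM) // psiD; last 2 first.
  + exact: span_pts1 p1.
  + exact: span_pts1 p2.
  by rewrite rmorphD mulrDl addrAC addrK subrr.
- move/allP; rewrite /= andbT => /and3P [p12 p1 p2]; case: Sin => Sy1 Sy2.
  rewrite !PhiB !Phi_delta // (gcompD gdS) //; last exact: SD.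
  by rewrite mulrDr addrAC addrK subrr.
- move/allP; rewrite /= andbT => /andP [prx px].
  rewrite PhiB PhiM !Phi_delta // (cM_lowest gdR gdM actM) // psiZ; last 2 first.
  + exact: (gcomp_in gdR).
  + exact: span_pts1 px.
  by rewrite rmorphM mulrA subrr.
- move/allP; rewrite /= andbT => /andP [pry px].
  rewrite PhiB PhiM !Phi_delta //.
  by rewrite (cS_iota gdR S1 SB SM Sneg gdS SqM Siota) // mulrCA subrr.
Qed.

Lemma Phi_relations (s : seq (R * trel R M K)) :
  foldr (fun p P => trel_in S p.2 /\ P) True s ->
  {subset flatten [seq relation_points iota p.2 | p <- s] <= pts} ->
  Phi (fun x y => \sum_(p <- s) p.1 * trel_eval iota p.2 x y) = 0.
Proof.
rewrite Phi_sum; elim: s => [|p s IH] /=; first by rewrite big_nil.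
move=> [Sp Ss] sub; rewrite big_cons PhiM (Phi_relation Sp) ?mulr0 ?add0r => [|t tp].
  by apply: IH => // t ts; apply: sub; rewrite mem_cat ts orbT.
by apply: sub; rewrite mem_cat tp.
Qed.

End Functional.

Lemma low_degree_tensor_nonzero d m a q : injective iota ->
  (forall z j, j < d -> cM j z = 0) -> Mz d m -> m != 0 ->
  q < 1 -> cS q a != 0 -> ~ tensor_zero iota S m a.
Proof.
move=> inj low Mdm mnz q1 aq [s [Sin Es]].
pose pts := undup ((m, a) :: flatten [seq relation_points iota p.2 | p <- s]).
have upts : uniq pts by apply: undup_uniq.
have mpts : (m, a) \in pts by rewrite mem_undup inE eqxx.
have [psi [psiF psim]] : exists psi, span_form R0 [seq cM d t.1 | t <- pts] psi /\ psi m != 0.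
  apply: (span_form_nonvanishing R0_0 R0_B R0_M fieldR) mnz.
  by have := span_pts1 low mpts; rewrite (gcomp_homog gdM d Mdm) eqxx.
have : Phi d q pts psi (tdelta m a) = 0.
  rewrite (Phi_ext d q pts psi Es) Phi_relations // => t tp.
  by rewrite mem_undup inE tp orbT.
rewrite Phi_delta // (gcomp_homog gdM d Mdm) eqxx; apply/eqP.
by rewrite mulf_neq0 // raddf_eq0.
Qed.

End Obstruction.

Theorem proposition2p11 (R : idomainType) (Rn : nat -> R -> Prop)
    (M : lmodType R) (Mz : int -> M -> Prop)
    (K : closedFieldType) (iota : {rmorphism R -> K})
    (S : K -> Prop) (Sq : rat -> K -> Prop) :
  Ngraded_ring Rn -> degree0_is_field Rn -> fg_over_degree0 Rn ->
  Zgraded_module Rn Mz -> fg_module M -> (exists m : M, m != 0) ->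
  injective iota -> algebraic_over iota ->
  max_Qgraded_ext iota Rn S Sq ->
  ~ (forall m : M, almost_zero iota S Sq m).
Proof.
move=> [gdR mulR] fieldR _ [gdM actM] fg Mnz inj _.
move=> [[_ [S1 [SB [SM [Sneg [gdS [SqM Siota]]]]]]] _] all_almost_zero.
have [d [low [m [Mdm mnz]]]] := lowest_degree gdR gdM actM fg Mnz.
have [a [Sa [_ [[q [[l [f [ul [Cf [E [ql [fq _]]]]]]] q1]] am0]]]] := all_almost_zero m 1 ltr01.
apply: (low_degree_tensor_nonzero gdR mulR fieldR gdM actM S1 SB SM Sneg gdS SqM Siota
          inj low Mdm mnz q1 _ am0).
by rewrite (gcompE gdS Sa ul Cf E q) /restrict ql.
Qed.
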